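(* Let $F$ be a free group of rank greater than one. Then there exist subgroups $A, B \leq F$ and an isomorphism $\phi: A \to B$ such that the HNN extension $(F, A, B, t, \phi)$ is not left-orderable.
   Context: Given a group $G$, subgroups $A, B \leq G$ and an isomorphism $\phi: A \to B$, the HNN extension $(G, A, B, t, \phi)$ is the quotient of the free product $G \ast \langle t \rangle$ (with $\langle t\rangle$ infinite cyclic) by the normal closure of the set $\{ t a t^{-1} \phi(a)^{-1} : a \in A\}$. A group is left-orderable if it admits a total order invariant under left multiplication. *)

(* Groups given by presentations, encoded concretely as words
   modulo the congruence generated by the relators and free cancellation. *)
From Stdlib Require Import List.
Import ListNotations.
Set Implicit Arguments.

(* A letter (y, true) stands for the generator y, (y, false) for y^-1. *)
Definition word (Y : Type) : Type := list (Y * bool).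

Definition inv_letter {Y : Type} (l : Y * bool) : Y * bool := (fst l, negb (snd l)).
Definition inv_word {Y : Type} (w : word Y) : word Y := rev (map inv_letter w).

Inductive cong {Y : Type} (R : word Y -> word Y -> Prop) : word Y -> word Y -> Prop :=
| cong_base : forall u v l r, R l r -> cong R (u ++ l ++ v) (u ++ r ++ v)
| cong_refl : forall w, cong R w w
| cong_sym : forall w1 w2, cong R w1 w2 -> cong R w2 w1
| cong_trans : forall w1 w2 w3, cong R w1 w2 -> cong R w2 w3 -> cong R w1 w3.

Definition free_rel {Y : Type} (l r : word Y) : Prop :=
  exists (y : Y) (b : bool), l = [(y, b); (y, negb b)] /\ r = [].

Definition feq {X : Type} (u v : word X) : Prop := cong (@free_rel X) u v.

Definition is_subgroup {X : Type} (A : word X -> Prop) : Prop :=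
  A [] /\
  (forall u v, A u -> A v -> A (u ++ v)) /\
  (forall u, A u -> A (inv_word u)) /\
  (forall u v, feq u v -> A u -> A v).

Definition is_iso {X : Type} (A B : word X -> Prop) (phi : word X -> word X) : Prop :=
  (forall u v, A u -> feq u v -> feq (phi u) (phi v)) /\
  (forall u, A u -> B (phi u)) /\
  (forall u v, A u -> A v -> feq (phi (u ++ v)) (phi u ++ phi v)) /\
  (forall u v, A u -> A v -> feq (phi u) (phi v) -> feq u v) /\
  (forall w, B w -> exists u, A u /\ feq (phi u) w).

(* Generators of the HNN extension: Some x for x in X, None for the stable letter t. *)
Definition liftw {X : Type} (w : word X) : word (option X) :=
  map (fun l => (Some (fst l), snd l)) w.

Definition hnn_rel {X : Type} (A : word X -> Prop) (phi : word X -> word X)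
  (l r : word (option X)) : Prop :=
  free_rel l r \/
  exists a, A a /\ l = (None, true) :: liftw a ++ [(None, false)] /\ r = liftw (phi a).

Definition left_orderable_pres {Y : Type} (R : word Y -> word Y -> Prop) : Prop :=
  exists lt : word Y -> word Y -> Prop,
    (forall u u' v v', cong R u u' -> cong R v v' -> lt u v -> lt u' v') /\
    (forall u, ~ lt u u) /\
    (forall u v w, lt u v -> lt v w -> lt u w) /\
    (forall u v, cong R u v \/ lt u v \/ lt v u) /\
    (forall u v w, lt u v -> lt (w ++ u) (w ++ v)).

(* Let g, h be distinct basis elements and A the index-4 subgroup of words in which
   both g and h have even exponent sum.  A carries an involutive automorphism phi,
   given on its Schreier generators and computed by a transducer that tracks the
   parity class of the prefix read so far; phi fixes g^2 and h^2 and sends g h g h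
   to its inverse, and phi (phi w) = w follows by telescoping.
   Suppose the HNN extension G = <F, t | t a t^-1 = phi a, a in A> had a left order.
   The letters g, h survive in G, which maps onto (Z/2)^2 by the parities of g and h
   (t going to 0), so we may choose a = g^+-1 and b = h^+-1 positive.  Then t a t^-1
   is positive too, for otherwise t a^-2 t^-1 = a^-2 would be, and likewise t b t^-1.
   For W = a b a b (if a = g) or W = b a b a (if a = g^-1) we get phi W = W^-1, so
   both W and t W t^-1 = W^-1 are positive: a contradiction. *)

From Stdlib Require Import List Bool ClassicalEpsilon.
Import ListNotations.

Section Congruence.
Variables (Y : Type) (R : word Y -> word Y -> Prop).

Lemma cong_app_l w u v : cong R u v -> cong R (w ++ u) (w ++ v).
Proof.
  induction 1.
  - rewrite !app_assoc, <- !(app_assoc (w ++ u)). apply cong_base; assumption.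
  - apply cong_refl.
  - apply cong_sym; assumption.
  - eapply cong_trans; eassumption.
Qed.

Lemma cong_app_r w u v : cong R u v -> cong R (u ++ w) (v ++ w).
Proof.
  induction 1.
  - rewrite <- !app_assoc. apply cong_base; assumption.
  - apply cong_refl.
  - apply cong_sym; assumption.
  - eapply cong_trans; eassumption.
Qed.

Lemma cong_app u u' v v' : cong R u u' -> cong R v v' -> cong R (u ++ v) (u' ++ v').
Proof.
  intros Hu Hv. eapply cong_trans; [apply cong_app_r, Hu | apply cong_app_l, Hv].
Qed.

Lemma cong_of_rel l r : R l r -> cong R l r.
Proof.
  intro H. pose proof (cong_base R [] [] l r H) as Hc. rewrite !app_nil_r in Hc. exact Hc.
Qed.

End Congruence.

Arguments cong_app_l {Y R} w {u v}.
Arguments cong_app_r {Y R} w {u v}.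
Arguments cong_app {Y R u u' v v'}.
Arguments cong_of_rel {Y R l r}.

Lemma cong_hom {Y Z : Type} (R : word Y -> word Y -> Prop) (S : word Z -> word Z -> Prop)
  (f : word Y -> word Z) :
  (forall u v, f (u ++ v) = f u ++ f v) ->
  (forall l r, R l r -> cong S (f l) (f r)) ->
  forall u v, cong R u v -> cong S (f u) (f v).
Proof.
  intros Hf HR u v H. induction H.
  - rewrite !Hf. apply cong_app_l, cong_app_r, HR; assumption.
  - apply cong_refl.
  - apply cong_sym; assumption.
  - eapply cong_trans; eassumption.
Qed.

Lemma cong_fold_left_invariant {Y S : Type} (R : word Y -> word Y -> Prop)
  (step : S -> Y * bool -> S) :
  (forall l r s, R l r -> fold_left step l s = fold_left step r s) ->
  forall u v, cong R u v -> forall s, fold_left step u s = fold_left step v s.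
Proof.
  intros HR u v H. induction H; intro s.
  - rewrite !fold_left_app. f_equal. apply HR; assumption.
  - reflexivity.
  - symmetry; auto.
  - etransitivity; eauto.
Qed.

Lemma inv_word_cons {Y : Type} (l : Y * bool) w : inv_word (l :: w) = inv_word w ++ [inv_letter l].
Proof. reflexivity. Qed.

Lemma inv_word_app {Y : Type} (u v : word Y) : inv_word (u ++ v) = inv_word v ++ inv_word u.
Proof. unfold inv_word. rewrite map_app, rev_app_distr. reflexivity. Qed.

Lemma inv_word_involutive {Y : Type} (w : word Y) : inv_word (inv_word w) = w.
Proof.
  unfold inv_word. rewrite map_rev, rev_involutive, map_map.
  erewrite map_ext; [apply map_id|]. intros [y b]. unfold inv_letter. simpl. rewrite negb_involutive. reflexivity.
Qed.

Section FreeCancellation.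
Variables (Y : Type) (R : word Y -> word Y -> Prop).
Hypothesis free_rel_R : forall l r, free_rel l r -> R l r.

Lemma cong_cancel_letter (l : Y * bool) : cong R [l; inv_letter l] [].
Proof. destruct l as [y b]. apply cong_of_rel, free_rel_R. exists y, b. split; reflexivity. Qed.

Lemma cong_inv_r (w : word Y) : cong R (w ++ inv_word w) [].
Proof.
  induction w as [|l w IH]; [apply cong_refl|].
  rewrite inv_word_cons.
  replace ((l :: w) ++ inv_word w ++ [inv_letter l]) with ([l] ++ (w ++ inv_word w) ++ [inv_letter l])
    by (simpl; rewrite app_assoc; reflexivity).
  eapply cong_trans; [apply cong_app_l, cong_app_r, IH | apply cong_cancel_letter].
Qed.

Lemma cong_inv_l (w : word Y) : cong R (inv_word w ++ w) [].
Proof. rewrite <- (inv_word_involutive w) at 2. apply cong_inv_r. Qed.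

End FreeCancellation.

Lemma feq_inv_r {Y : Type} (w : word Y) : feq (w ++ inv_word w) [].
Proof. apply cong_inv_r. auto. Qed.

Lemma feq_inv_l {Y : Type} (w : word Y) : feq (inv_word w ++ w) [].
Proof. apply cong_inv_l. auto. Qed.

Lemma feq_inv_word {Y : Type} (u v : word Y) : feq u v -> feq (inv_word u) (inv_word v).
Proof.
  induction 1.
  - rewrite !inv_word_app, <- !app_assoc. apply cong_app_l, cong_app_r.
    destruct H as [y [b [-> ->]]]. apply cong_of_rel. exists y, b.
    destruct b; split; reflexivity.
  - apply cong_refl.
  - apply cong_sym; assumption.
  - eapply cong_trans; eassumption.
Qed.

Definition rename {Y Z : Type} (f : Y -> Z) (w : word Y) : word Z :=
  map (fun l => (f (fst l), snd l)) w.

Lemma feq_rename {Y Z : Type} (f : Y -> Z) u v : feq u v -> feq (rename f u) (rename f v).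
Proof.
  apply cong_hom; [apply map_app|].
  intros l r [y [b [-> ->]]]. apply cong_of_rel. exists (f y), b. split; reflexivity.
Qed.

Section FreeReduction.
Variables (Y : Type) (Y_eq_dec : forall x y : Y, {x = y} + {x <> y}).

Definition cancels (l l' : Y * bool) : bool :=
  if Y_eq_dec (fst l) (fst l') then negb (Bool.eqb (snd l) (snd l')) else false.

Lemma cancels_inv_letter l l' : cancels l l' = true -> l' = inv_letter l.
Proof.
  destruct l as [y b], l' as [y' b']. unfold cancels, inv_letter. simpl.
  destruct (Y_eq_dec y y') as [<-|]; [|discriminate].
  destruct b, b'; simpl; congruence.
Qed.

Definition reduce_cons (l : Y * bool) (w : word Y) : word Y :=
  match w with
  | l' :: w' => if cancels l l' then w' else l :: w
  | [] => [l]
  end.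

Definition reduce (w : word Y) : word Y := fold_right reduce_cons [] w.

Lemma feq_reduce w : feq w (reduce w).
Proof.
  induction w as [|l w IH]; [apply cong_refl|].
  eapply cong_trans; [exact (cong_app_l [l] IH)|]. simpl.
  destruct (reduce w) as [|l' w'] eqn:E; [apply cong_refl|]. simpl.
  destruct (cancels l l') eqn:C; [|apply cong_refl].
  apply cancels_inv_letter in C. subst l'.
  apply (cong_app_r w' (cong_cancel_letter _ _ (fun _ _ H => H) l)).
Qed.

Lemma feq_of_reduce u v : reduce u = reduce v -> feq u v.
Proof.
  intro E. eapply cong_trans; [apply feq_reduce|]. rewrite E. apply cong_sym, feq_reduce.
Qed.

End FreeReduction.

Section Transducer.
Context {Y Z S : Type} (step : S -> Y * bool -> S) (emit : S -> Y -> word Z).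
Hypothesis step_inv : forall s l, step (step s l) (inv_letter l) = s.

Definition run (s : S) (w : word Y) : S := fold_left step w s.

Definition emit_letter (s : S) (l : Y * bool) : word Z :=
  if snd l then emit s (fst l) else inv_word (emit (step s l) (fst l)).

Fixpoint transduce (s : S) (w : word Y) : word Z :=
  match w with
  | [] => []
  | l :: w' => emit_letter s l ++ transduce (step s l) w'
  end.

Lemma run_app s u v : run s (u ++ v) = run (run s u) v.
Proof. apply fold_left_app. Qed.

Lemma run_inv_word s w : run (run s w) (inv_word w) = s.
Proof.
  revert s; induction w as [|l w IH]; intro s; [reflexivity|].
  rewrite inv_word_cons, run_app.
  change (run s (l :: w)) with (run (step s l) w). rewrite IH. apply step_inv.
Qed.

Lemma run_feq u v : feq u v -> forall s, run s u = run s v.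
Proof.
  apply cong_fold_left_invariant. intros l r s [y [b [-> ->]]]. exact (step_inv s (y, b)).
Qed.

Lemma run_stabilizer_subgroup s : is_subgroup (fun w => run s w = s).
Proof.
  split; [reflexivity|]. split; [|split].
  - intros u v Hu Hv. rewrite run_app, Hu. exact Hv.
  - intros u Hu. pose proof (run_inv_word s u) as H. rewrite Hu in H. exact H.
  - intros u v Huv Hu. rewrite <- (run_feq u v Huv s). exact Hu.
Qed.

Lemma emit_letter_inv s l : emit_letter (step s l) (inv_letter l) = inv_word (emit_letter s l).
Proof.
  destruct l as [y [|]]; unfold emit_letter; simpl.
  - rewrite (step_inv s (y, true)). reflexivity.
  - rewrite inv_word_involutive. reflexivity.
Qed.

Lemma transduce_app s u v : transduce s (u ++ v) = transduce s u ++ transduce (run s u) v.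
Proof.
  revert s; induction u as [|l u IH]; intro s; [reflexivity|].
  simpl. rewrite IH, app_assoc. reflexivity.
Qed.

Lemma transduce_inv_word s w : transduce (run s w) (inv_word w) = inv_word (transduce s w).
Proof.
  revert s; induction w as [|l w IH]; intro s; [reflexivity|].
  rewrite inv_word_cons, transduce_app.
  change (run s (l :: w)) with (run (step s l) w). rewrite IH, run_inv_word.
  simpl. rewrite emit_letter_inv, app_nil_r, inv_word_app. reflexivity.
Qed.

Lemma transduce_feq u v : feq u v -> forall s, feq (transduce s u) (transduce s v).
Proof.
  induction 1; intro s.
  - destruct H as [y [b [-> ->]]]. rewrite !transduce_app. apply cong_app_l.
    change (y, negb b) with (inv_letter (y, b)). simpl.
    rewrite emit_letter_inv, step_inv, app_nil_r.
    exact (cong_app_r _ (feq_inv_r _)).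
  - apply cong_refl.
  - apply cong_sym, IHcong.
  - eapply cong_trans; [apply IHcong1 | apply IHcong2].
Qed.

End Transducer.

Record positive_cone {Y : Type} (R : word Y -> word Y -> Prop) (P : word Y -> Prop) : Prop := {
  cone_app : forall u v, P u -> P v -> P (u ++ v);
  cone_cong : forall u v, cong R u v -> P u -> P v;
  cone_nil : ~ P [];
  cone_total : forall w, ~ cong R w [] -> P w \/ P (inv_word w)
}.

Arguments cone_app {Y R P}.
Arguments cone_cong {Y R P}.
Arguments cone_nil {Y R P}.
Arguments cone_total {Y R P}.

Lemma left_orderable_positive_cone {Y : Type} (R : word Y -> word Y -> Prop) :
  (forall l r, free_rel l r -> R l r) ->
  left_orderable_pres R -> exists P, positive_cone R P.
Proof.
  intros free_rel_R [lt [Hcompat [Hirr [Htrans [Htotal Hleft]]]]].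
  exists (lt []). split.
  - intros u v Hu Hv. apply Htrans with u; [exact Hu|].
    rewrite <- (app_nil_r u) at 1. apply Hleft, Hv.
  - intros u v Huv Hu. exact (Hcompat _ _ _ _ (cong_refl _ _) Huv Hu).
  - apply Hirr.
  - intros w Hw. destruct (Htotal [] w) as [H|[H|H]].
    + exfalso. apply Hw, cong_sym, H.
    + left. exact H.
    + right. apply (Hcompat (inv_word w ++ w) [] (inv_word w ++ [])).
      * apply cong_inv_l, free_rel_R.
      * rewrite app_nil_r. apply cong_refl.
      * apply Hleft, H.
Qed.

Lemma is_iso_of_involution {X : Type} (A : word X -> Prop) (phi : word X -> word X) :
  (forall u v, feq u v -> feq (phi u) (phi v)) ->
  (forall u, A u -> A (phi u)) ->
  (forall u v, A u -> A v -> feq (phi (u ++ v)) (phi u ++ phi v)) ->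
  (forall u, A u -> feq (phi (phi u)) u) ->
  is_iso A A phi.
Proof.
  intros Hfeq HA Happ Hinvol. split; [|split; [|split; [|split]]].
  - intros u v _ H. apply Hfeq, H.
  - exact HA.
  - exact Happ.
  - intros u v Hu Hv H. eapply cong_trans; [apply cong_sym, Hinvol, Hu|].
    eapply cong_trans; [apply Hfeq, H | apply Hinvol, Hv].
  - intros w Hw. exists (phi w). split; [apply HA, Hw | apply Hinvol, Hw].
Qed.

Section HNN.
Variables (X : Type) (A : word X -> Prop) (phi : word X -> word X).
Let RH := hnn_rel A phi.

Definition conj_t (w : word X) : word (option X) := (None, true) :: liftw w ++ [(None, false)].

Lemma hnn_free_rel l r : free_rel l r -> RH l r.
Proof. left. assumption. Qed.

Lemma cong_conj_t a : A a -> cong RH (conj_t a) (liftw (phi a)).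
Proof. intro Ha. apply cong_of_rel. right. exists a. split; [exact Ha | split; reflexivity]. Qed.

Lemma cong_liftw u v : feq u v -> cong RH (liftw u) (liftw v).
Proof.
  apply cong_hom; [apply map_app|].
  intros l r [y [b [-> ->]]]. apply cong_of_rel, hnn_free_rel. exists (Some y), b. split; reflexivity.
Qed.

Lemma cong_conj_t_app u v : cong RH (conj_t u ++ conj_t v) (conj_t (u ++ v)).
Proof.
  unfold conj_t, liftw. rewrite map_app. simpl. rewrite <- !app_assoc. simpl.
  apply (cong_app_l ((None, true) :: map _ u)).
  exact (cong_app_r _ (cong_cancel_letter _ _ hnn_free_rel (None, false))).
Qed.

Lemma conj_t_nontrivial w : ~ cong RH (liftw w) [] -> ~ cong RH (conj_t w) [].
Proof.
  intros Hw Ht. apply Hw.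
  set (c := [(None, false); (None, true)] : word (option X)).
  assert (Hc : cong RH c []) by exact (cong_cancel_letter _ _ hnn_free_rel (None, false)).
  assert (Hunconj : cong RH (c ++ liftw w ++ c) (liftw w)).
  { pose proof (cong_app Hc (cong_app_l (liftw w) Hc)) as H. rewrite app_nil_r in H. exact H. }
  eapply cong_trans; [apply cong_sym, Hunconj|].
  replace (c ++ liftw w ++ c) with ([(None, false)] ++ conj_t w ++ [(None, true)])
    by (unfold c, conj_t; simpl; rewrite <- !app_assoc; reflexivity).
  eapply cong_trans; [exact (cong_app_l _ (cong_app_r _ Ht)) | exact Hc].
Qed.

Section PositiveCone.
Variable P : word (option X) -> Prop.
Hypothesis HP : positive_cone RH P.

Lemma cone_not_inverse u v : P u -> P v -> ~ cong RH (u ++ v) [].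
Proof. intros Hu Hv H. apply (cone_nil HP), (cone_cong HP _ _ H), (cone_app HP); assumption. Qed.

Lemma cone_letter x : ~ cong RH (liftw [(x, true)]) [] -> exists b, P (liftw [(x, b)]).
Proof. intro Hx. destruct (cone_total HP _ Hx) as [H|H]; [exists true | exists false]; exact H. Qed.

Lemma cone_conj_t_letter x b :
  A [(x, negb b); (x, negb b)] ->
  feq (phi [(x, negb b); (x, negb b)]) [(x, negb b); (x, negb b)] ->
  P (liftw [(x, b)]) -> P (conj_t [(x, b)]).
Proof.
  intros HA Hphi Hx.
  assert (Hx_nontriv : ~ cong RH (liftw [(x, b)]) []).
  { intro H. apply (cone_nil HP), (cone_cong HP _ _ H), Hx. }
  destruct (cone_total HP _ (conj_t_nontrivial _ Hx_nontriv)) as [H|H]; [exact H | exfalso].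
  change (inv_word (conj_t [(x, b)])) with (conj_t [(x, negb b)]) in H.
  assert (Hsq : P (liftw [(x, negb b); (x, negb b)])).
  { apply (cone_cong HP (conj_t [(x, negb b)] ++ conj_t [(x, negb b)])); [|exact (cone_app HP _ _ H H)].
    eapply cong_trans; [apply cong_conj_t_app|].
    eapply cong_trans; [apply cong_conj_t, HA | apply cong_liftw, Hphi]. }
  apply (cone_not_inverse _ _ (cone_app HP _ _ Hx Hx) Hsq).
  exact (cong_liftw ([(x, b); (x, b)] ++ inv_word [(x, b); (x, b)]) [] (feq_inv_r _)).
Qed.

Lemma cone_positive_word (Q : X * bool -> Prop) :
  (forall l, Q l -> P (liftw [l]) /\ P (conj_t [l])) ->
  forall W, W <> [] -> Forall Q W -> P (liftw W) /\ P (conj_t W).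
Proof.
  intros HQ W HW HF. induction HF as [|l W Hl HF IH]; [contradiction|].
  destruct (HQ l Hl) as [Hl1 Hl2].
  destruct W as [|l' W]; [split; assumption|].
  destruct (IH ltac:(discriminate)) as [HW1 HW2]. split.
  - exact (cone_app HP (liftw [l]) _ Hl1 HW1).
  - exact (cone_cong HP _ _ (cong_conj_t_app [l] _) (cone_app HP _ _ Hl2 HW2)).
Qed.

End PositiveCone.

Lemma hnn_not_left_orderable (g h : X) :
  (forall x, x = g \/ x = h -> ~ cong RH (liftw [(x, true)]) []) ->
  (forall x b, x = g \/ x = h -> A [(x, b); (x, b)] /\ feq (phi [(x, b); (x, b)]) [(x, b); (x, b)]) ->
  (forall bg bh, exists W, W <> [] /\ Forall (fun l => l = (g, bg) \/ l = (h, bh)) W /\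
                           A W /\ feq (phi W) (inv_word W)) ->
  ~ left_orderable_pres RH.
Proof.
  intros Hnontriv Hsq Hinv HLO.
  destruct (left_orderable_positive_cone _ hnn_free_rel HLO) as [P HP].
  assert (Hpos : forall x, x = g \/ x = h -> exists b, P (liftw [(x, b)]) /\ P (conj_t [(x, b)])).
  { intros x Hx. destruct (cone_letter P HP x (Hnontriv x Hx)) as [b Hb].
    destruct (Hsq x (negb b) Hx) as [HA Hphi].
    exists b. split; [exact Hb | exact (cone_conj_t_letter P HP x b HA Hphi Hb)]. }
  destruct (Hpos g (or_introl eq_refl)) as [bg Hg].
  destruct (Hpos h (or_intror eq_refl)) as [bh Hh].
  destruct (Hinv bg bh) as [W [HWne [HWpos [HA Hphi]]]].
  assert (HWletters : forall l, l = (g, bg) \/ l = (h, bh) -> P (liftw [l]) /\ P (conj_t [l]))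
    by (intros l [-> | ->]; assumption).
  destruct (cone_positive_word P HP _ HWletters W HWne HWpos) as [HW HtW].
  apply (cone_not_inverse P HP (liftw W) (liftw (inv_word W)) HW).
  - apply (cone_cong HP (conj_t W)); [|exact HtW].
    eapply cong_trans; [apply cong_conj_t, HA | apply cong_liftw, Hphi].
  - unfold liftw. rewrite <- map_app. exact (cong_liftw _ [] (feq_inv_r W)).
Qed.

End HNN.

Section Construction.
Context {X : Type} (g h : X).
Hypothesis g_neq_h : g <> h.

Inductive letter_kind := Kg | Kh | Kother.

Definition kind_of (x : X) : letter_kind :=
  if excluded_middle_informative (x = g) then Kg
  else if excluded_middle_informative (x = h) then Kh else Kother.

Lemma kind_of_g : kind_of g = Kg.
Proof. unfold kind_of. destruct (excluded_middle_informative (g = g)); congruence. Qed.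

Lemma kind_of_h : kind_of h = Kh.
Proof.
  unfold kind_of. destruct (excluded_middle_informative (h = g)); [congruence|].
  destruct (excluded_middle_informative (h = h)); congruence.
Qed.

Lemma kind_of_Kg x : kind_of x = Kg -> x = g.
Proof.
  unfold kind_of. destruct (excluded_middle_informative (x = g)); [auto|].
  destruct (excluded_middle_informative (x = h)); discriminate.
Qed.

Lemma kind_of_Kh x : kind_of x = Kh -> x = h.
Proof.
  unfold kind_of. destruct (excluded_middle_informative (x = g)); [discriminate|].
  destruct (excluded_middle_informative (x = h)); [auto | discriminate].
Qed.

Definition parity : Type := bool * bool.

Definition flip (s : parity) (l : X * bool) : parity :=
  match kind_of (fst l) with
  | Kg => (negb (fst s), snd s)
  | Kh => (fst s, negb (snd s))
  | Kother => s
  end.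

Lemma flip_inv s l : flip (flip s l) (inv_letter l) = s.
Proof.
  destruct s as [a b]. unfold flip. simpl.
  destruct (kind_of (fst l)); simpl; rewrite ?negb_involutive; reflexivity.
Qed.

Lemma flip_g s b : flip s (g, b) = (negb (fst s), snd s).
Proof. unfold flip. simpl. rewrite kind_of_g. reflexivity. Qed.

Lemma flip_h s b : flip s (h, b) = (fst s, negb (snd s)).
Proof. unfold flip. simpl. rewrite kind_of_h. reflexivity. Qed.

Lemma flip_other s x b : kind_of x = Kother -> flip s (x, b) = s.
Proof. intro Hx. unfold flip. simpl. rewrite Hx. reflexivity. Qed.

Definition xor_parity (s t : parity) : parity := (xorb (fst s) (fst t), xorb (snd s) (snd t)).

Lemma run_flip_xor w : forall s t, run flip (xor_parity s t) w = xor_parity s (run flip t w).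
Proof.
  induction w as [|l w IH]; intros s t; [reflexivity|].
  change (run flip (flip (xor_parity s t) l) w = xor_parity s (run flip (flip t l) w)).
  rewrite <- IH. f_equal. destruct s as [a b], t as [c d]. unfold flip, xor_parity. simpl.
  destruct (kind_of (fst l)); simpl; rewrite ?negb_xorb_r; reflexivity.
Qed.

Definition even_gh (w : word X) : Prop := run flip (false, false) w = (false, false).

Lemma even_gh_run s w : even_gh w -> run flip s w = s.
Proof.
  intro Hw. replace s with (xor_parity s (false, false)) at 1 by (destruct s as [[] []]; reflexivity).
  rewrite run_flip_xor, Hw. destruct s as [[] []]; reflexivity.
Qed.

Definition transversal (s : parity) : word X :=
  match s with
  | (false, false) => []
  | (true, false) => [(g, true)]
  | (false, true) => [(h, true)]
  | (true, true) => [(g, true); (h, true)]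
  end.

Definition schreier (s : parity) (l : X * bool) : word X :=
  transversal s ++ [l] ++ inv_word (transversal (flip s l)).

(* phi is the involution of [even_gh] fixing g^2, h^2, h g h^-1 g^-1 and every
   other basis element, and sending g h g h to its inverse; [g_image s] and
   [h_image s] are the images of [schreier s (g, true)] and [schreier s (h, true)]. *)
Definition g_image (s : parity) : word X :=
  match s with
  | (false, false) => []
  | (true, false) => [(g, true); (g, true)]
  | (false, true) => [(h, true); (g, true); (h, false); (g, false)]
  | (true, true) => [(h, false); (g, false); (h, false); (g, false); (h, false); (h, false)]
  end.

Definition h_image (s : parity) : word X :=
  match s with
  | (false, false) => []
  | (false, true) => [(h, true); (h, true)]
  | (true, false) => []
  | (true, true) => [(h, false); (g, false); (h, false); (g, false); (h, false); (h, false);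
                     (g, true); (h, false); (g, true); (h, false)]
  end.

Definition phi_gen (s : parity) (x : X) : word X :=
  match kind_of x with
  | Kg => g_image s
  | Kh => h_image s
  | Kother => transversal s ++ [(x, true)] ++ inv_word (transversal s)
  end.

Definition phi (w : word X) : word X := transduce flip phi_gen (false, false) w.

Lemma phi_gen_g s : phi_gen s g = g_image s.
Proof. unfold phi_gen. rewrite kind_of_g. reflexivity. Qed.

Lemma phi_gen_h s : phi_gen s h = h_image s.
Proof. unfold phi_gen. rewrite kind_of_h. reflexivity. Qed.

Lemma phi_gen_other s x :
  kind_of x = Kother -> phi_gen s x = transversal s ++ [(x, true)] ++ inv_word (transversal s).
Proof. intro Hx. unfold phi_gen. rewrite Hx. reflexivity. Qed.

Ltac compute_words :=
  repeat progress (cbn [phi transduce emit_letter run fold_left app rev map inv_word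
                        fst snd negb transversal g_image h_image];
                   unfold inv_letter; cbn [fst snd negb];
                   rewrite ?flip_g, ?flip_h, ?phi_gen_g, ?phi_gen_h).

(* X has no decidable equality, so words in g, h are freely reduced over the alphabet bool. *)
Definition bool_to_gh (y : bool) : X := if y then g else h.

Ltac reify_gh w :=
  lazymatch w with
  | nil => constr:(@nil (bool * bool))
  | cons (g, ?b) ?r => let r' := reify_gh r in constr:(cons (true, b) r')
  | cons (h, ?b) ?r => let r' := reify_gh r in constr:(cons (false, b) r')
  end.

Ltac solve_feq_gh :=
  lazymatch goal with
  | |- feq ?u ?v =>
      let u' := reify_gh u in
      let v' := reify_gh v in
      change (feq (rename bool_to_gh u') (rename bool_to_gh v'));
      apply feq_rename, (feq_of_reduce _ Bool.bool_dec); vm_compute; reflexivity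
  end.

Lemma run_transversal s : run flip (false, false) (transversal s) = s.
Proof. destruct s as [[] []]; compute_words; reflexivity. Qed.

Lemma even_gh_phi_gen s x : even_gh (phi_gen s x).
Proof.
  unfold even_gh. destruct (kind_of x) eqn:Hx.
  - apply kind_of_Kg in Hx. subst x. destruct s as [[] []]; compute_words; reflexivity.
  - apply kind_of_Kh in Hx. subst x. destruct s as [[] []]; compute_words; reflexivity.
  - rewrite phi_gen_other by exact Hx.
    rewrite !run_app, run_transversal.
    change (run flip s [(x, true)]) with (flip s (x, true)). rewrite flip_other by exact Hx.
    rewrite <- (run_transversal s) at 1. apply (run_inv_word _ flip_inv).
Qed.

Lemma even_gh_emit_letter s l : even_gh (emit_letter flip phi_gen s l).
Proof.
  destruct l as [x []]; unfold emit_letter; simpl; [apply even_gh_phi_gen|].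
  unfold even_gh. rewrite <- (even_gh_phi_gen (flip s (x, false)) x) at 1.
  apply (run_inv_word _ flip_inv).
Qed.

Lemma even_gh_transduce s w : even_gh (transduce flip phi_gen s w).
Proof.
  revert s; induction w as [|l w IH]; intro s; [reflexivity|].
  unfold even_gh. simpl. rewrite run_app, even_gh_emit_letter. apply IH.
Qed.

Lemma phi_transversal s : phi (transversal s) = [].
Proof. destruct s as [[] []]; compute_words; reflexivity. Qed.

Lemma phi_inv_transversal s : transduce flip phi_gen s (inv_word (transversal s)) = [].
Proof.
  rewrite <- (run_transversal s) at 1.
  rewrite (transduce_inv_word _ _ flip_inv). fold (phi (transversal s)).
  rewrite phi_transversal. reflexivity.
Qed.

Lemma phi_phi_gen s x : feq (phi (phi_gen s x)) (schreier s (x, true)).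
Proof.
  unfold schreier. destruct (kind_of x) eqn:Hx.
  - apply kind_of_Kg in Hx. subst x. destruct s as [[] []]; compute_words; solve_feq_gh.
  - apply kind_of_Kh in Hx. subst x. destruct s as [[] []]; compute_words; solve_feq_gh.
  - rewrite phi_gen_other, flip_other by exact Hx. unfold phi.
    rewrite !transduce_app. fold (phi (transversal s)).
    rewrite phi_transversal, run_transversal.
    change (run flip s [(x, true)]) with (flip s (x, true)). rewrite flip_other by exact Hx.
    rewrite phi_inv_transversal. simpl.
    unfold emit_letter. simpl. rewrite phi_gen_other by exact Hx.
    rewrite !app_nil_r. apply cong_refl.
Qed.

Lemma phi_app u v : even_gh u -> phi (u ++ v) = phi u ++ phi v.
Proof. intro Hu. unfold phi. rewrite transduce_app. unfold even_gh in Hu. rewrite Hu. reflexivity. Qed.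

Lemma phi_inv_word w : even_gh w -> phi (inv_word w) = inv_word (phi w).
Proof. intro Hw. unfold even_gh in Hw. unfold phi. rewrite <- Hw at 1. apply (transduce_inv_word _ _ flip_inv). Qed.

Lemma schreier_inv s l : inv_word (schreier (flip s l) (inv_letter l)) = schreier s l.
Proof.
  unfold schreier. rewrite flip_inv, !inv_word_app, inv_word_involutive, <- app_assoc.
  change (inv_word [inv_letter l]) with (inv_word (inv_word [l])). rewrite inv_word_involutive.
  reflexivity.
Qed.

Lemma phi_emit_letter s l : feq (phi (emit_letter flip phi_gen s l)) (schreier s l).
Proof.
  destruct l as [x []]; [apply phi_phi_gen|].
  unfold emit_letter. simpl. rewrite phi_inv_word by apply even_gh_phi_gen.
  rewrite <- (schreier_inv s (x, false)). apply feq_inv_word, phi_phi_gen.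
Qed.

Lemma phi_transduce u s :
  feq (phi (transduce flip phi_gen s u)) (transversal s ++ u ++ inv_word (transversal (run flip s u))).
Proof.
  revert s; induction u as [|l u IH]; intro s; [exact (cong_sym (feq_inv_r _))|].
  change (transduce flip phi_gen s (l :: u))
    with (emit_letter flip phi_gen s l ++ transduce flip phi_gen (flip s l) u).
  rewrite phi_app by apply even_gh_emit_letter.
  eapply cong_trans; [exact (cong_app (phi_emit_letter s l) (IH (flip s l)))|].
  unfold schreier. change (run flip s (l :: u)) with (run flip (flip s l) u).
  set (t := transversal (flip s l)). set (rest := u ++ inv_word (transversal (run flip (flip s l) u))).
  replace ((transversal s ++ [l] ++ inv_word t) ++ t ++ rest)
    with ((transversal s ++ [l]) ++ (inv_word t ++ t) ++ rest) by (rewrite <- !app_assoc; reflexivity).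
  replace (transversal s ++ (l :: u) ++ inv_word (transversal (run flip (flip s l) u)))
    with ((transversal s ++ [l]) ++ [] ++ rest) by (unfold rest; rewrite <- app_assoc; reflexivity).
  apply cong_app_l, cong_app_r, feq_inv_l.
Qed.

Lemma phi_involutive u : even_gh u -> feq (phi (phi u)) u.
Proof.
  intro Hu. pose proof (phi_transduce u (false, false)) as H.
  unfold even_gh in Hu. rewrite Hu, app_nil_r in H. exact H.
Qed.

Lemma even_gh_subgroup : is_subgroup even_gh.
Proof. exact (run_stabilizer_subgroup _ flip_inv (false, false)). Qed.

Lemma phi_is_iso : is_iso even_gh even_gh phi.
Proof.
  apply is_iso_of_involution.
  - intros u v H. exact (transduce_feq _ _ flip_inv u v H _).
  - intros u _. apply even_gh_transduce.
  - intros u v Hu _. rewrite phi_app by exact Hu. apply cong_refl.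
  - exact phi_involutive.
Qed.

Definition flip_hnn (s : parity) (l : option X * bool) : parity :=
  match fst l with
  | Some x => flip s (x, snd l)
  | None => s
  end.

Lemma fold_flip_hnn_liftw s w : fold_left flip_hnn (liftw w) s = run flip s w.
Proof. revert s; induction w as [|l w IH]; intro s; [reflexivity | apply IH]. Qed.

Lemma hnn_parity_invariant u v :
  cong (hnn_rel even_gh phi) u v ->
  fold_left flip_hnn u (false, false) = fold_left flip_hnn v (false, false).
Proof.
  intro H. apply (cong_fold_left_invariant (hnn_rel even_gh phi) flip_hnn); [|exact H].
  clear u v H. intros l r s [[[y|] [b [-> ->]]] | [a [Ha [-> ->]]]].
  - exact (flip_inv s (y, b)).
  - reflexivity.
  - cbn [fold_left]. rewrite fold_left_app. cbn [fold_left flip_hnn fst].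
    rewrite !fold_flip_hnn_liftw, (even_gh_run s a Ha).
    symmetry. apply even_gh_run, even_gh_transduce.
Qed.

Lemma letter_nontrivial x : x = g \/ x = h -> ~ cong (hnn_rel even_gh phi) (liftw [(x, true)]) [].
Proof.
  intros Hx H. apply hnn_parity_invariant in H. cbn [liftw map fold_left flip_hnn fst snd] in H.
  destruct Hx as [-> | ->]; [rewrite flip_g in H | rewrite flip_h in H]; discriminate.
Qed.

Lemma phi_square x b :
  x = g \/ x = h -> even_gh [(x, b); (x, b)] /\ feq (phi [(x, b); (x, b)]) [(x, b); (x, b)].
Proof.
  intros [-> | ->]; destruct b;
    (split; [unfold even_gh; compute_words; reflexivity | compute_words; solve_feq_gh]).
Qed.

Lemma phi_inverts_positive_word bg bh :
  exists W, W <> [] /\ Forall (fun l => l = (g, bg) \/ l = (h, bh)) W /\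
            even_gh W /\ feq (phi W) (inv_word W).
Proof.
  exists (if bg then [(g, true); (h, bh); (g, true); (h, bh)]
          else [(h, bh); (g, false); (h, bh); (g, false)]).
  destruct bg, bh; (split; [discriminate|]);
    (split; [repeat (apply Forall_cons; [auto|]); apply Forall_nil|]);
    (split; [unfold even_gh; compute_words; reflexivity | compute_words; solve_feq_gh]).
Qed.

Lemma hnn_even_gh_not_left_orderable : ~ left_orderable_pres (hnn_rel even_gh phi).
Proof.
  apply (hnn_not_left_orderable _ _ _ g h).
  - exact letter_nontrivial.
  - exact phi_square.
  - exact phi_inverts_positive_word.
Qed.

End Construction.

Theorem theorem1p2 (X : Type) (hX : exists x y : X, x <> y) :
  exists (A B : word X -> Prop) (phi : word X -> word X),
    is_subgroup A /\ is_subgroup B /\ is_iso A B phi /\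
    ~ left_orderable_pres (hnn_rel A phi).
Proof.
  destruct hX as [g [h g_neq_h]].
  exists (even_gh g h), (even_gh g h), (phi g h).
  split; [apply even_gh_subgroup|]. split; [apply even_gh_subgroup|]. split.
  - exact (phi_is_iso g h g_neq_h).
  - exact (hnn_even_gh_not_left_orderable g h g_neq_h).
Qed.
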